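(* Let $T$, $S$, $A$ be closed Hermitian subspaces in $X^2$ with $D(T)=D(S)=:D\subset D(A)$ and $T=S+A$, and assume $\rho(T)\cap\rho(S)\neq\emptyset$. (i) If $A_s$ is $S_s$-compact, then $T$ is a compact perturbation of $S$. (ii) If $T$ is a compact perturbation of $S$, $T(0)^\perp$ reduces both $S$ and $A$, and $T_s$ is a bounded operator on $D$, then $A_s$ is $S_s$-compact.
   Context: $X$ is a complex Hilbert space and $X^2=X\times X$ carries the inner product $\langle (x,f),(y,g)\rangle=\langle x,y\rangle+\langle f,g\rangle$. A subspace $T$ in $X^2$ means a linear subspace of $X^2$ (a linear relation); a linear operator in $X$ is identified with its graph. Notation: $D(T)=\{x:(x,f)\in T \text{ for some } f\}$, $T(x)=\{f:(x,f)\in T\}$, $T^{-1}=\{(f,x):(x,f)\in T\}$, $\lambda I$ is the graph of $x\mapsto \lambda x$, and $T-\lambda I=\{(x,f-\lambda x):(x,f)\in T\}$. The adjoint is $T^*=\{(y,g)\in X^2:\langle g,x\rangle=\langle y,f\rangle \text{ for all }(x,f)\in T\}$; $T$ is Hermitian if $T\subset T^*$. For subspaces $S,A$ in $X^2$, $S+A=\{(x,f+g):(x,f)\in S,(x,g)\in A\}$. For a closed subspace $T$, set $T_\infty=\{(0,g)\in X^2:(0,g)\in T\}$ and $T_s=T\ominus T_\infty$ (orthogonal complement of $T_\infty$ in $T$), so $T=T_s\oplus T_\infty$; $T_s$ is the graph of a linear operator (the operator part of $T$) with $D(T_s)=D(T)$ and $R(T_s)\subset T(0)^\perp$. Resolvent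 set: $\rho(T)=\{\lambda\in\mathbb C:(\lambda I-T)^{-1}$ is a bounded linear operator defined on all of $X\}$. Reducing subspace: a closed subspace $X_1\subset X$ with orthogonal projection $P$ onto it reduces $T$ if $\{(Px,Pf):(x,f)\in T\}\subset T$. For linear operators $U,V$ in $X$ with $D(V)\subset D(U)$: $U$ is $V$-compact if $U|_{D(V)}$ is compact as a map from $(D(V),\|\cdot\|_V)$ into $X$, where $\|x\|_V=\|x\|+\|Vx\|$. Compact perturbation: for closed subspaces $T,S$ in $X^2$ with orthogonal projections $P_T,P_S$ of $X^2$ onto $T$, $S$, $T$ is a compact perturbation of $S$ if $P_T-P_S$ is a compact operator. *)

From Stdlib Require Import Reals.
Open Scope R_scope.

Definition Cplx : Type := (R * R)%type.
Definition Cre (z : Cplx) : R := fst z.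
Definition Cim (z : Cplx) : R := snd z.
Definition C0 : Cplx := (0, 0).
Definition C1 : Cplx := (1, 0).
Definition Cplus (z w : Cplx) : Cplx := (fst z + fst w, snd z + snd w).
Definition Copp (z : Cplx) : Cplx := (- fst z, - snd z).
Definition Cmult (z w : Cplx) : Cplx :=
  (fst z * fst w - snd z * snd w, fst z * snd w + snd z * fst w).
Definition Cconj (z : Cplx) : Cplx := (fst z, - snd z).

Record Hilbert : Type := {
  H :> Type;
  hadd : H -> H -> H;
  hzero : H;
  hopp : H -> H;
  hscal : Cplx -> H -> H;
  hinner : H -> H -> Cplx;
  hadd_assoc : forall x y z, hadd x (hadd y z) = hadd (hadd x y) z;
  hadd_comm : forall x y, hadd x y = hadd y x;
  hadd_0 : forall x, hadd x hzero = x;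
  hadd_opp : forall x, hadd x (hopp x) = hzero;
  hscal_assoc : forall a b x, hscal a (hscal b x) = hscal (Cmult a b) x;
  hscal_1 : forall x, hscal C1 x = x;
  hscal_distr_v : forall a x y, hscal a (hadd x y) = hadd (hscal a x) (hscal a y);
  hscal_distr_c : forall a b x, hscal (Cplus a b) x = hadd (hscal a x) (hscal b x);
  hinner_add_l : forall x y z, hinner (hadd x y) z = Cplus (hinner x z) (hinner y z);
  hinner_scal_l : forall a x y, hinner (hscal a x) y = Cmult a (hinner x y);
  hinner_conj : forall x y, hinner y x = Cconj (hinner x y);
  hinner_pos : forall x, 0 <= Cre (hinner x x);
  hinner_def : forall x, hinner x x = C0 -> x = hzero;
  hcomplete : forall u : nat -> H,
    (forall eps, eps > 0 -> exists N, forall n m, (n >= N)%nat -> (m >= N)%nat ->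
       sqrt (Cre (hinner (hadd (u n) (hopp (u m))) (hadd (u n) (hopp (u m))))) < eps) ->
    exists l, forall eps, eps > 0 -> exists N, forall n, (n >= N)%nat ->
       sqrt (Cre (hinner (hadd (u n) (hopp l)) (hadd (u n) (hopp l)))) < eps
}.

Arguments hadd {h}. Arguments hzero {h}. Arguments hopp {h}.
Arguments hscal {h}. Arguments hinner {h}.

Section Defs.
Variable X : Hilbert.

Definition hsub (x y : X) : X := hadd x (hopp y).
Definition hnorm (x : X) : R := sqrt (Cre (hinner x x)).

Definition conv (u : nat -> X) (l : X) : Prop :=
  forall eps, eps > 0 -> exists N, forall n, (n >= N)%nat -> hnorm (hsub (u n) l) < eps.

Definition X2 : Type := (X * X)%type.
Definition padd (p q : X2) : X2 := (hadd (fst p) (fst q), hadd (snd p) (snd q)).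
Definition psub (p q : X2) : X2 := (hsub (fst p) (fst q), hsub (snd p) (snd q)).
Definition pinner (p q : X2) : Cplx := Cplus (hinner (fst p) (fst q)) (hinner (snd p) (snd q)).
Definition pnorm (p : X2) : R := sqrt (Cre (pinner p p)).
Definition pconv (u : nat -> X2) (l : X2) : Prop :=
  forall eps, eps > 0 -> exists N, forall n, (n >= N)%nat -> pnorm (psub (u n) l) < eps.

(** A subspace of X^2 (a linear relation), given by its membership predicate:
    [T x f] means (x,f) in T. *)
Definition rel : Type := X -> X -> Prop.

Definition is_subspace (T : rel) : Prop :=
  T hzero hzero /\
  (forall x f y g, T x f -> T y g -> T (hadd x y) (hadd f g)) /\
  (forall a x f, T x f -> T (hscal a x) (hscal a f)).

Definition is_closed (T : rel) : Prop :=
  forall (u : nat -> X2) (l : X2),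
    (forall n, T (fst (u n)) (snd (u n))) -> pconv u l -> T (fst l) (snd l).

Definition closed_subspace (T : rel) : Prop := is_subspace T /\ is_closed T.

Definition dom (T : rel) (x : X) : Prop := exists f, T x f.

Definition adjoint (T : rel) : rel :=
  fun y g => forall x f, T x f -> hinner g x = hinner y f.
Definition hermitian (T : rel) : Prop := forall x f, T x f -> adjoint T x f.

Definition rel_sum (S A : rel) : rel :=
  fun x h => exists f g, S x f /\ A x g /\ h = hadd f g.

Definition rel_eq (T S : rel) : Prop := forall x f, T x f <-> S x f.

(** T_infinity and T_s = T minus-orthogonal T_infinity *)
Definition Tinf (T : rel) : rel := fun x g => x = hzero /\ T hzero g.
Definition Tpart (T : rel) : rel :=
  fun x f => T x f /\ (forall y g, Tinf T y g -> pinner (x, f) (y, g) = C0).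

Definition rel_inv (T : rel) : rel := fun f x => T x f.
Definition lamI_minus (lam : Cplx) (T : rel) : rel :=
  fun x h => exists f, T x f /\ h = hsub (hscal lam x) f.

Definition bounded_operator_on_X (R0 : rel) : Prop :=
  is_subspace R0 /\
  (forall x, exists y, R0 x y) /\
  (forall x y1 y2, R0 x y1 -> R0 x y2 -> y1 = y2) /\
  (exists M, forall x y, R0 x y -> hnorm y <= M * hnorm x).

Definition in_resolvent (lam : Cplx) (T : rel) : Prop :=
  bounded_operator_on_X (rel_inv (lamI_minus lam T)).

Definition orth_of_T0 (T : rel) : X -> Prop :=
  fun x => forall g, T hzero g -> hinner x g = C0.

Definition is_orth_proj (X1 : X -> Prop) (P : X -> X) : Prop :=
  forall x, X1 (P x) /\ (forall y, X1 y -> hinner (hsub x (P x)) y = C0).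

Definition reduces (X1 : X -> Prop) (T : rel) : Prop :=
  exists P, is_orth_proj X1 P /\ (forall x f, T x f -> T (P x) (P f)).

Definition is_orth_proj2 (T : rel) (P : X2 -> X2) : Prop :=
  forall p, T (fst (P p)) (snd (P p)) /\
    (forall q, T (fst q) (snd q) -> pinner (psub p (P p)) q = C0).

Definition compact2 (K : X2 -> X2) : Prop :=
  forall (u : nat -> X2) (M : R), (forall n, pnorm (u n) <= M) ->
    exists (phi : nat -> nat) (l : X2),
      (forall n, (phi n < phi (S n))%nat) /\ pconv (fun n => K (u (phi n))) l.

Definition compact_perturbation (T S : rel) : Prop :=
  exists PT PS, is_orth_proj2 T PT /\ is_orth_proj2 S PS /\
    compact2 (fun p => psub (PT p) (PS p)).

Definition rel_compact (U V : rel) : Prop :=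
  (forall x, dom V x -> dom U x) /\
  forall (x y g : nat -> X) (M : R),
    (forall n, V (x n) (y n)) -> (forall n, U (x n) (g n)) ->
    (forall n, hnorm (x n) + hnorm (y n) <= M) ->
    exists (phi : nat -> nat) (l : X),
      (forall n, (phi n < phi (S n))%nat) /\ conv (fun n => g (phi n)) l.

Definition bounded_on_dom (T : rel) : Prop :=
  exists M, forall x f, T x f -> hnorm f <= M * hnorm x.

End Defs.

Arguments hsub {X}. Arguments hnorm {X}.

(* A common point of the resolvent sets gives [T(0) = D^perp = S(0)]. Write [P_T], [P_S] for the
   orthogonal projections of [X^2] onto the graphs and [V_P a = (0, a) - P (0, a)] ([vdefect]).
   Since the graphs differ by the vertical vectors [(0, A_s x)], the maps [P_T - P_S],
   [(I - P_S) P_T] and [(I - P_T) P_S] act on points of the graphs as [V_P (+- A_s x)].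
   (i) [P_T - P_S = (I - P_S) P_T - P_S (I - P_T)], and [P_S (I - P_T)] is the adjoint of
   [(I - P_T) P_S], so both terms are compact once these two factors are; by the factorisation
   this follows from the [S_s]-compactness of [A_s], the graph norm on [T] being controlled by
   [|S_s x| <= C (|x| + |T_s x|)], itself a consequence of that compactness by normalisation.
   (ii) On the graph of [S_s], [P_T - P_S] is [V_(P_T) (A_s x)]; the reduction hypothesis puts
   [A_s x] in [T(0)^perp], where [V_(P_T)] is bounded below because [T_s] is bounded. *)

From Stdlib Require Import Reals Lra Lia ClassicalEpsilon.
Open Scope R_scope.

Arguments hadd_assoc {h}. Arguments hadd_comm {h}. Arguments hadd_0 {h}.
Arguments hadd_opp {h}. Arguments hscal_assoc {h}. Arguments hscal_1 {h}.
Arguments hscal_distr_v {h}. Arguments hscal_distr_c {h}. Arguments hinner_add_l {h}.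
Arguments hinner_scal_l {h}. Arguments hinner_conj {h}. Arguments hinner_pos {h}.
Arguments hinner_def {h}. Arguments hcomplete {h}.

Lemma Cplx_eq (z w : Cplx) : fst z = fst w -> snd z = snd w -> z = w.
Proof. destruct z, w; simpl; intros; subst; reflexivity. Qed.

Ltac csolve := unfold Cplus, Copp, Cmult, Cconj, C0, C1, Cre, Cim in *;
  apply Cplx_eq; simpl; ring.

Section InnerAlgebra.
Variable Y : Hilbert.
Implicit Types x y z : Y.

Lemma hadd_0_l x : hadd hzero x = x.
Proof. rewrite hadd_comm; apply hadd_0. Qed.

Lemma hadd_opp_l x : hadd (hopp x) x = hzero.
Proof. rewrite hadd_comm; apply hadd_opp. Qed.

Lemma hadd_cancel_l x y z : hadd x y = hadd x z -> y = z.
Proof.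
  intro E. rewrite <- (hadd_0_l y), <- (hadd_0_l z), <- (hadd_opp_l x), <- !hadd_assoc, E.
  reflexivity.
Qed.

Lemma hscal_0 x : hscal C0 x = hzero.
Proof.
  apply (hadd_cancel_l (hscal C0 x)). rewrite hadd_0, <- hscal_distr_c.
  f_equal. csolve.
Qed.

Lemma hinner_0_l y : hinner hzero y = C0.
Proof. rewrite <- (hscal_0 hzero), hinner_scal_l. csolve. Qed.

Lemma hinner_opp_l x y : hinner (hopp x) y = Copp (hinner x y).
Proof.
  assert (E : hopp x = hscal (Copp C1) x).
  { apply (hadd_cancel_l x). rewrite hadd_opp. rewrite <- (hscal_1 x) at 1.
    rewrite <- hscal_distr_c, <- (hscal_0 x). f_equal. csolve. }
  rewrite E, hinner_scal_l. csolve.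
Qed.

Lemma hinner_sub_l x y z : hinner (hsub x y) z = Cplus (hinner x z) (Copp (hinner y z)).
Proof. unfold hsub. rewrite hinner_add_l, hinner_opp_l. reflexivity. Qed.

Lemma hinner_ext x y : (forall q, hinner x q = hinner y q) -> x = y.
Proof.
  intro E. assert (D : hsub x y = hzero).
  { apply hinner_def. rewrite hinner_sub_l, !E. csolve. }
  unfold hsub in D. rewrite <- (hadd_0 x), <- (hadd_opp_l y), hadd_assoc, D. apply hadd_0_l.
Qed.

Lemma hinner_add_r x y z : hinner x (hadd y z) = Cplus (hinner x y) (hinner x z).
Proof.
  rewrite (hinner_conj (hadd y z)), hinner_add_l, (hinner_conj y x), (hinner_conj z x).
  destruct (hinner y x), (hinner z x). csolve.
Qed.

Lemma hinner_scal_r a x y : hinner x (hscal a y) = Cmult (Cconj a) (hinner x y).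
Proof.
  rewrite (hinner_conj (hscal a y)), hinner_scal_l, (hinner_conj y x).
  destruct (hinner y x), a. csolve.
Qed.

Lemma hinner_0_r x : hinner x hzero = C0.
Proof. rewrite hinner_conj, hinner_0_l. csolve. Qed.

Lemma hinner_opp_r x y : hinner x (hopp y) = Copp (hinner x y).
Proof.
  rewrite (hinner_conj (hopp y)), hinner_opp_l, (hinner_conj y x).
  destruct (hinner y x). csolve.
Qed.

Lemma hinner_sub_r x y z : hinner x (hsub y z) = Cplus (hinner x y) (Copp (hinner x z)).
Proof. unfold hsub. rewrite hinner_add_r, hinner_opp_r. reflexivity. Qed.

Lemma hsub_eq0 x y : hsub x y = hzero -> x = y.
Proof.
  intro E. apply hinner_ext. intro q.
  assert (Z : hinner (hsub x y) q = C0) by (rewrite E; apply hinner_0_l).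
  rewrite hinner_sub_l in Z. destruct (hinner x q), (hinner y q).
  unfold Cplus, Copp, C0 in Z. injection Z; intros. apply Cplx_eq; simpl; lra.
Qed.

End InnerAlgebra.

(* Two vectors are equal iff they have the same inner product with every [q]; this reduces
   any identity of linear combinations to a ring identity between complex numbers. *)
Ltac vsolve := apply hinner_ext; intro;
  repeat rewrite ?hinner_add_l, ?hinner_scal_l, ?hinner_opp_l, ?hinner_sub_l, ?hinner_0_l;
  csolve.

Definition RtoC (t : R) : Cplx := (t, 0).
Definition re_inner {Y : Hilbert} (x y : Y) : R := Cre (hinner x y).

Section RealInner.
Variable Y : Hilbert.
Implicit Types x y z : Y.

Lemma re_inner_sym x y : re_inner x y = re_inner y x.
Proof. unfold re_inner. rewrite (hinner_conj x y). reflexivity. Qed.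
Lemma re_inner_add_l x y z : re_inner (hadd x y) z = re_inner x z + re_inner y z.
Proof. unfold re_inner. rewrite hinner_add_l. reflexivity. Qed.
Lemma re_inner_add_r x y z : re_inner x (hadd y z) = re_inner x y + re_inner x z.
Proof. unfold re_inner. rewrite hinner_add_r. reflexivity. Qed.
Lemma re_inner_sub_l x y z : re_inner (hsub x y) z = re_inner x z - re_inner y z.
Proof. unfold re_inner. rewrite hinner_sub_l. unfold Cre, Cplus, Copp. simpl. ring. Qed.
Lemma re_inner_sub_r x y z : re_inner x (hsub y z) = re_inner x y - re_inner x z.
Proof. unfold re_inner. rewrite hinner_sub_r. unfold Cre, Cplus, Copp. simpl. ring. Qed.
Lemma re_inner_opp_l x y : re_inner (hopp x) y = - re_inner x y.
Proof. unfold re_inner. rewrite hinner_opp_l. reflexivity. Qed.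
Lemma re_inner_opp_r x y : re_inner x (hopp y) = - re_inner x y.
Proof. unfold re_inner. rewrite hinner_opp_r. reflexivity. Qed.
Lemma re_inner_0_l y : re_inner hzero y = 0.
Proof. unfold re_inner. rewrite hinner_0_l. reflexivity. Qed.
Lemma re_inner_0_r y : re_inner y hzero = 0.
Proof. unfold re_inner. rewrite hinner_0_r. reflexivity. Qed.
Lemma re_inner_scal_l t x y : re_inner (hscal (RtoC t) x) y = t * re_inner x y.
Proof. unfold re_inner, RtoC. rewrite hinner_scal_l. unfold Cre, Cmult. simpl. ring. Qed.
Lemma re_inner_scal_r t x y : re_inner x (hscal (RtoC t) y) = t * re_inner x y.
Proof. unfold re_inner, RtoC. rewrite hinner_scal_r. unfold Cre, Cmult, Cconj. simpl. ring. Qed.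

Lemma re_inner_self_nonneg x : 0 <= re_inner x x.
Proof. apply hinner_pos. Qed.

Lemma hinner_self_im x : snd (hinner x x) = 0.
Proof.
  pose proof (hinner_conj x x) as E. destruct (hinner x x) as [a b].
  unfold Cconj in E; simpl in *. injection E. lra.
Qed.

Lemma re_inner_self_eq0 x : re_inner x x = 0 -> x = hzero.
Proof. intro E. apply hinner_def, Cplx_eq; [exact E | apply hinner_self_im]. Qed.

Lemma hnorm_nonneg x : 0 <= hnorm x.
Proof. apply sqrt_pos. Qed.

Lemma hnorm_sqr x : hnorm x * hnorm x = re_inner x x.
Proof. apply sqrt_sqrt, re_inner_self_nonneg. Qed.

Lemma hnorm_0 : hnorm (@hzero Y) = 0.
Proof. unfold hnorm. fold (re_inner (@hzero Y) hzero). rewrite re_inner_0_l. apply sqrt_0. Qed.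

Lemma hnorm_le_of_sqr x y : re_inner x x <= re_inner y y -> hnorm x <= hnorm y.
Proof. intro; apply sqrt_le_1_alt; auto. Qed.

Lemma sqr_le_of_hnorm x y : hnorm x <= hnorm y -> re_inner x x <= re_inner y y.
Proof. intro. rewrite <- !hnorm_sqr. pose proof (hnorm_nonneg x). nra. Qed.

Lemma cauchy_schwarz x y : re_inner x y <= hnorm x * hnorm y.
Proof.
  assert (Q : forall t, 0 <= re_inner x x + 2 * t * re_inner x y + t * t * re_inner y y).
  { intro t. pose proof (re_inner_self_nonneg (hadd x (hscal (RtoC t) y))) as P.
    rewrite !re_inner_add_l, !re_inner_add_r, !re_inner_scal_l, !re_inner_scal_r,
      (re_inner_sym y x) in P. lra. }
  assert (B : re_inner x y * re_inner x y <= re_inner x x * re_inner y y).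
  { destruct (Req_dec (re_inner y y) 0) as [E|E].
    - pose proof (re_inner_self_eq0 y E). subst y. rewrite re_inner_0_r, re_inner_0_l. lra.
    - pose proof (re_inner_self_nonneg y). set (t := - re_inner x y / re_inner y y).
      specialize (Q t).
      assert (0 <= re_inner y y * (re_inner x x + 2 * t * re_inner x y
                                     + t * t * re_inner y y)) as P by (apply Rmult_le_pos; lra).
      replace (re_inner y y * (re_inner x x + 2 * t * re_inner x y + t * t * re_inner y y))
        with (re_inner x x * re_inner y y - re_inner x y * re_inner x y) in P
        by (unfold t; field; auto).
      lra. }
  rewrite <- !hnorm_sqr in B.
  assert (N : 0 <= hnorm x * hnorm y) by (apply Rmult_le_pos; apply hnorm_nonneg).
  destruct (Rle_lt_dec (re_inner x y) (hnorm x * hnorm y)) as [Le|Lt]; [exact Le | nra].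
Qed.

Lemma hnorm_triangle x y : hnorm (hadd x y) <= hnorm x + hnorm y.
Proof.
  assert (S2 : re_inner (hadd x y) (hadd x y) <= (hnorm x + hnorm y) * (hnorm x + hnorm y)).
  { rewrite !re_inner_add_l, !re_inner_add_r, (re_inner_sym y x).
    pose proof (cauchy_schwarz x y). rewrite <- !hnorm_sqr. nra. }
  rewrite <- hnorm_sqr in S2. pose proof (hnorm_nonneg (hadd x y)).
  pose proof (hnorm_nonneg x). pose proof (hnorm_nonneg y). nra.
Qed.

Lemma hnorm_opp x : hnorm (hopp x) = hnorm x.
Proof.
  unfold hnorm. fold (re_inner (hopp x) (hopp x)) (re_inner x x).
  rewrite re_inner_opp_l, re_inner_opp_r, Ropp_involutive. reflexivity.
Qed.

Lemma hopp_lipschitz x y : hnorm (hsub (hopp x) (hopp y)) <= 1 * hnorm (hsub x y).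
Proof.
  replace (hsub (hopp x) (hopp y)) with (hopp (hsub x y)) by vsolve. rewrite hnorm_opp. lra.
Qed.

Lemma hnorm_sub_triangle x y : hnorm (hsub x y) <= hnorm x + hnorm y.
Proof. unfold hsub. rewrite <- (hnorm_opp y). apply hnorm_triangle. Qed.

Lemma hnorm_scal_real t x : hnorm (hscal (RtoC t) x) = Rabs t * hnorm x.
Proof.
  unfold hnorm. fold (re_inner (hscal (RtoC t) x) (hscal (RtoC t) x)) (re_inner x x).
  rewrite re_inner_scal_l, re_inner_scal_r, <- Rmult_assoc, sqrt_mult_alt
    by (pose proof (Rle_0_sqr t); unfold Rsqr in *; lra).
  change (t * t) with (Rsqr t). rewrite sqrt_Rsqr_abs. reflexivity.
Qed.

End RealInner.

Definition strictly_increasing (phi : nat -> nat) : Prop := forall n, (phi n < phi (S n))%nat.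

Lemma strictly_increasing_lt phi :
  strictly_increasing phi -> forall a b, (a < b)%nat -> (phi a < phi b)%nat.
Proof. intros H a b Hab. induction Hab; [apply H | specialize (H m); lia]. Qed.

Lemma strictly_increasing_ge_id phi : strictly_increasing phi -> forall n, (n <= phi n)%nat.
Proof. intros H n. induction n; [lia | specialize (H n); lia]. Qed.

Lemma strictly_increasing_comp phi psi :
  strictly_increasing phi -> strictly_increasing psi ->
  strictly_increasing (fun n => phi (psi n)).
Proof. intros H1 H2 n. apply strictly_increasing_lt; auto. Qed.

Lemma inv_succ_lt d : d > 0 -> exists N, forall n, (n >= N)%nat -> / (INR n + 1) < d.
Proof.
  intros Hd. destruct (archimed (/ d)) as [A _].
  assert (U : 0 <= IZR (up (/ d))) by (pose proof (Rinv_0_lt_compat d Hd); lra).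
  exists (Z.to_nat (up (/ d))). intros n Hn.
  assert (INR n >= IZR (up (/d))).
  { rewrite INR_IZR_INZ. apply Rle_ge, IZR_le. apply le_IZR in U. lia. }
  replace d with (/ / d) by (field; lra).
  apply Rinv_lt_contravar; [| lra].
  apply Rmult_lt_0_compat; [apply Rinv_0_lt_compat; lra | pose proof (pos_INR n); lra].
Qed.

Lemma inv_succ_le_1 n : / (INR n + 1) <= 1.
Proof. rewrite <- Rinv_1. apply Rinv_le_contravar; [lra | pose proof (pos_INR n); lra]. Qed.

Section Sequences.
Variable Y : Hilbert.
Implicit Types u v : nat -> Y.

Definition cauchy u : Prop :=
  forall eps, eps > 0 -> exists N, forall n m, (n >= N)%nat -> (m >= N)%nat ->
    hnorm (hsub (u n) (u m)) < eps.

Lemma cauchy_conv u : cauchy u -> exists l, conv Y u l.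
Proof. exact (hcomplete u). Qed.

Lemma conv_cauchy u l : conv Y u l -> cauchy u.
Proof.
  intros H eps He. destruct (H (eps/2)) as [N HN]; [lra|]. exists N. intros n m Hn Hm.
  replace (hsub (u n) (u m)) with (hsub (hsub (u n) l) (hsub (u m) l)) by vsolve.
  eapply Rle_lt_trans; [apply hnorm_sub_triangle|].
  pose proof (HN n Hn). pose proof (HN m Hm). lra.
Qed.

Lemma conv_ext u v l : (forall n, u n = v n) -> conv Y u l -> conv Y v l.
Proof.
  intros E H eps He. destruct (H eps He) as [N HN]. exists N. intros. rewrite <- E. auto.
Qed.

Lemma conv_subseq u l phi :
  strictly_increasing phi -> conv Y u l -> conv Y (fun n => u (phi n)) l.
Proof.
  intros Hp Hc eps He. destruct (Hc eps He) as [N HN]. exists N. intros n Hn.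
  apply HN. pose proof (strictly_increasing_ge_id phi Hp n). lia.
Qed.

Lemma conv_sub u v l m :
  conv Y u l -> conv Y v m -> conv Y (fun n => hsub (u n) (v n)) (hsub l m).
Proof.
  intros Hu Hv eps He. destruct (Hu (eps/2)) as [N1 H1]; [lra|].
  destruct (Hv (eps/2)) as [N2 H2]; [lra|]. exists (max N1 N2). intros n Hn.
  replace (hsub (hsub (u n) (v n)) (hsub l m))
    with (hsub (hsub (u n) l) (hsub (v n) m)) by vsolve.
  eapply Rle_lt_trans; [apply hnorm_sub_triangle|].
  specialize (H1 n ltac:(lia)). specialize (H2 n ltac:(lia)). lra.
Qed.

Lemma conv_0_of_le_inv u : (forall n, hnorm (u n) <= / (INR n + 1)) -> conv Y u hzero.
Proof.
  intros H eps He. destruct (inv_succ_lt eps He) as [N HN]. exists N. intros n Hn.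
  replace (hsub (u n) hzero) with (u n) by vsolve.
  eapply Rle_lt_trans; [apply H | apply HN, Hn].
Qed.

End Sequences.

Lemma conv_lipschitz (Y Z : Hilbert) (F : Y -> Z) K u l :
  0 <= K -> (forall a b, hnorm (hsub (F a) (F b)) <= K * hnorm (hsub a b)) ->
  conv Y u l -> conv Z (fun n => F (u n)) (F l).
Proof.
  intros HK HF Hc eps He. destruct (Hc (eps / (K + 1))) as [N HN].
  { apply Rdiv_lt_0_compat; lra. }
  exists N. intros n Hn. specialize (HN n Hn). eapply Rle_lt_trans; [apply HF|].
  apply Rle_lt_trans with ((K + 1) * hnorm (hsub (u n) l)).
  - pose proof (hnorm_nonneg _ (hsub (u n) l)). nra.
  - replace eps with ((K + 1) * (eps / (K + 1))) by (field; lra).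
    apply Rmult_lt_compat_l; lra.
Qed.

Lemma quadratic_nonneg_linear_0 B Q :
  0 <= Q -> (forall t, 0 <= - 2 * t * B + t * t * Q) -> B = 0.
Proof.
  intros HQ H. specialize (H (B / (Q + 1))).
  assert (P : 0 <= (Q + 1) * (Q + 1) * (- 2 * (B / (Q + 1)) * B + B / (Q + 1) * (B / (Q + 1)) * Q))
    by (apply Rmult_le_pos; nra).
  replace ((Q + 1) * (Q + 1) * (- 2 * (B / (Q + 1)) * B + B / (Q + 1) * (B / (Q + 1)) * Q))
    with (- (B * B) * (Q + 2)) in P by (field; lra).
  nra.
Qed.

Section Projection.
Variable Y : Hilbert.
Implicit Types x y p q c : Y.

Definition vsubspace (C : Y -> Prop) : Prop :=
  C hzero /\ (forall x y, C x -> C y -> C (hadd x y)) /\ (forall a x, C x -> C (hscal a x)).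

Definition vclosed (C : Y -> Prop) : Prop :=
  forall u l, (forall n : nat, C (u n)) -> conv Y u l -> C l.

Lemma vsubspace_sub C x y : vsubspace C -> C x -> C y -> C (hsub x y).
Proof.
  intros [_ [Ha Hs]] Hx Hy.
  replace (hsub x y) with (hadd x (hscal (Copp C1) y)) by vsolve. auto.
Qed.

Lemma parallelogram_mid p a b :
  re_inner (hsub a b) (hsub a b) =
    2 * re_inner (hsub p a) (hsub p a) + 2 * re_inner (hsub p b) (hsub p b)
    - 4 * re_inner (hsub p (hscal (RtoC (/2)) (hadd a b))) (hsub p (hscal (RtoC (/2)) (hadd a b))).
Proof.
  rewrite !re_inner_sub_l, !re_inner_sub_r, !re_inner_scal_l, !re_inner_scal_r,
    !re_inner_add_l, !re_inner_add_r.
  rewrite (re_inner_sym _ a p), (re_inner_sym _ b p), (re_inner_sym _ b a). field.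
Qed.

Variable C : Y -> Prop.
Hypothesis HC : vsubspace C.
Variable p : Y.

Lemma dist_inf_exists : exists d, 0 <= d /\ (forall c, C c -> d <= hnorm (hsub p c)) /\
  (forall eps, eps > 0 -> exists c, C c /\ hnorm (hsub p c) < d + eps).
Proof.
  set (E := fun r => exists c, C c /\ r = - hnorm (hsub p c)).
  destruct (completeness E) as [m [Hub Hlub]].
  - exists 0. intros r [c [_ ->]]. pose proof (hnorm_nonneg _ (hsub p c)). lra.
  - exists (- hnorm (hsub p hzero)), hzero. split; [apply HC | reflexivity].
  - exists (- m). split; [|split].
    + enough (m <= 0) by lra. apply Hlub.
      intros r [c [_ ->]]. pose proof (hnorm_nonneg _ (hsub p c)). lra.
    + intros c Hc. enough (- hnorm (hsub p c) <= m) by lra. apply Hub. exists c; auto.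
    + intros eps He. apply NNPP. intro N.
      enough (m <= m - eps) by lra. apply Hlub. intros r [c [Hc ->]].
      destruct (Rlt_le_dec (hnorm (hsub p c)) (- m + eps)); [exfalso; eauto | lra].
Qed.

Lemma minimizing_seq_cauchy d cs : 0 <= d -> (forall c, C c -> d <= hnorm (hsub p c)) ->
  (forall n, C (cs n) /\ hnorm (hsub p (cs n)) < d + / (INR n + 1)) -> cauchy Y cs.
Proof.
  intros Dpos Dlow Hcs eps He.
  set (dl := Rmin 1 (eps * eps / (8 * d + 4))).
  assert (dl1 : dl <= 1) by apply Rmin_l.
  assert (dl2 : (8 * d + 4) * dl <= eps * eps).
  { pose proof (Rmin_r 1 (eps * eps / (8 * d + 4))) as M. fold dl in M.
    apply Rmult_le_compat_l with (r := 8 * d + 4) in M; [|lra].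
    replace ((8 * d + 4) * (eps * eps / (8 * d + 4))) with (eps * eps) in M by (field; lra).
    exact M. }
  destruct (inv_succ_lt dl) as [N HN].
  { apply Rmin_pos; [lra | apply Rdiv_lt_0_compat; nra]. }
  exists N. intros n k Hn Hk.
  pose proof (HN n Hn) as En. pose proof (HN k Hk) as Ek.
  assert (en0 : 0 < / (INR n + 1)) by (apply Rinv_0_lt_compat; pose proof (pos_INR n); lra).
  assert (ek0 : 0 < / (INR k + 1)) by (apply Rinv_0_lt_compat; pose proof (pos_INR k); lra).
  destruct (Hcs n) as [Cn An], (Hcs k) as [Ck Ak].
  pose proof (Dlow _ Cn). pose proof (Dlow _ Ck).
  assert (Cw : C (hscal (RtoC (/2)) (hadd (cs n) (cs k)))) by (apply HC, HC; auto).
  pose proof (Dlow _ Cw) as Lw.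
  pose proof (parallelogram_mid p (cs n) (cs k)) as Par. rewrite <- !hnorm_sqr in Par.
  set (w := hscal (RtoC (/2)) (hadd (cs n) (cs k))) in *.
  set (en := / (INR n + 1)) in *. set (ek := / (INR k + 1)) in *.
  pose proof (hnorm_nonneg _ (hsub (cs n) (cs k))).
  (* Minimality of [d] at the midpoint [w] forces the near-minimizers together. *)
  assert (hnorm (hsub (cs n) (cs k)) * hnorm (hsub (cs n) (cs k)) < eps * eps).
  { rewrite Par.
    assert (hnorm (hsub p (cs n)) * hnorm (hsub p (cs n)) < (d + en) * (d + en)) by nra.
    assert (hnorm (hsub p (cs k)) * hnorm (hsub p (cs k)) < (d + ek) * (d + ek)) by nra.
    assert (d * d <= hnorm (hsub p w) * hnorm (hsub p w)) by nra.
    nra. }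
  nra.
Qed.

Hypothesis Hcl : vclosed C.

Lemma nearest_point_exists :
  exists c, C c /\ forall c', C c' -> hnorm (hsub p c) <= hnorm (hsub p c').
Proof.
  destruct dist_inf_exists as [d [Dpos [Dlow Dapp]]].
  destruct (choice (fun n c => C c /\ hnorm (hsub p c) < d + / (INR n + 1))) as [cs Hcs].
  { intro n. apply Dapp. apply Rinv_0_lt_compat. pose proof (pos_INR n). lra. }
  destruct (cauchy_conv _ cs (minimizing_seq_cauchy d cs Dpos Dlow Hcs)) as [c Hc].
  exists c. split; [apply (Hcl cs); auto; intro n; apply Hcs |].
  intros c' Hc'. apply Rle_trans with d; [| apply Dlow, Hc'].
  apply Rle_plus_epsilon. intros eps He.
  destruct (Hc (eps/2)) as [N1 H1]; [lra|].
  destruct (inv_succ_lt (eps/2)) as [N2 H2]; [lra|].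
  set (n := max N1 N2). specialize (H1 n ltac:(lia)). specialize (H2 n ltac:(lia)).
  destruct (Hcs n) as [_ Hn].
  replace (hsub p c) with (hadd (hsub p (cs n)) (hsub (cs n) c)) by vsolve.
  eapply Rle_trans; [apply hnorm_triangle | lra].
Qed.

Lemma nearest_point_orth c : C c -> (forall c', C c' -> hnorm (hsub p c) <= hnorm (hsub p c')) ->
  forall q, C q -> hinner (hsub p c) q = C0.
Proof.
  intros Cc Hmin.
  assert (Re : forall q, C q -> re_inner (hsub p c) q = 0).
  { intros q Cq. apply (quadratic_nonneg_linear_0 _ (re_inner q q)).
    { apply re_inner_self_nonneg. }
    intro t. assert (Ct : C (hadd c (hscal (RtoC t) q))) by (apply HC; auto; apply HC, Cq).
    pose proof (sqr_le_of_hnorm _ _ _ (Hmin _ Ct)) as L.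
    replace (hsub p (hadd c (hscal (RtoC t) q)))
      with (hsub (hsub p c) (hscal (RtoC t) q)) in L by vsolve.
    remember (hsub p c) as r. clear Heqr.
    rewrite !re_inner_sub_l, !re_inner_sub_r, !re_inner_scal_l, !re_inner_scal_r,
      (re_inner_sym _ q r) in L.
    lra. }
  intros q Cq. apply Cplx_eq; [apply Re, Cq |].
  (* the imaginary part is the real part against [i q] *)
  pose proof (Re (hscal (0,1) q) (proj2 (proj2 HC) _ _ Cq)) as E. unfold re_inner in E.
  rewrite hinner_scal_r in E. destruct (hinner (hsub p c) q) as [a b].
  unfold Cre, Cmult, Cconj in E. simpl in *. lra.
Qed.

End Projection.

Lemma orth_proj_exists (Y : Hilbert) (C : Y -> Prop) :
  vsubspace Y C -> vclosed Y C -> exists P, is_orth_proj Y C P.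
Proof.
  intros HC Hcl.
  apply (choice (fun p c => C c /\ forall q, C q -> hinner (hsub p c) q = C0)).
  intro p. destruct (nearest_point_exists Y C HC p Hcl) as [c [Cc Hmin]].
  exists c. split; [exact Cc | apply nearest_point_orth; auto].
Qed.

Section OrthProj.
Variable Y : Hilbert.
Variable C : Y -> Prop.
Variable P : Y -> Y.
Hypothesis HC : vsubspace Y C.
Hypothesis HP : is_orth_proj Y C P.
Implicit Types p q c : Y.

Lemma proj_in p : C (P p).
Proof. apply HP. Qed.

Lemma proj_orth p q : C q -> hinner (hsub p (P p)) q = C0.
Proof. apply HP. Qed.

Lemma proj_unique p c : C c -> (forall q, C q -> hinner (hsub p c) q = C0) -> P p = c.
Proof.
  intros Cc Hc. apply hsub_eq0, hinner_def. set (d := hsub (P p) c).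
  assert (Cd : C d) by (apply vsubspace_sub; auto; apply proj_in).
  replace (hinner d d) with (Cplus (hinner (hsub p c) d) (Copp (hinner (hsub p (P p)) d))).
  - rewrite Hc, proj_orth by exact Cd. csolve.
  - unfold d at 3. rewrite !hinner_sub_l.
    destruct (hinner p d), (hinner c d), (hinner (P p) d). csolve.
Qed.

Lemma proj_id c : C c -> P c = c.
Proof.
  intro Cc. apply proj_unique; auto. intros q _.
  replace (hsub c c) with (@hzero Y) by vsolve. apply hinner_0_l.
Qed.

Lemma proj_add p q : P (hadd p q) = hadd (P p) (P q).
Proof.
  apply proj_unique; [apply HC; apply proj_in |].
  intros r Cr. replace (hsub (hadd p q) (hadd (P p) (P q)))
    with (hadd (hsub p (P p)) (hsub q (P q))) by vsolve.
  rewrite hinner_add_l, !proj_orth; auto. csolve.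
Qed.

Lemma proj_scal a p : P (hscal a p) = hscal a (P p).
Proof.
  apply proj_unique; [apply HC, proj_in |].
  intros r Cr. replace (hsub (hscal a p) (hscal a (P p))) with (hscal a (hsub p (P p))) by vsolve.
  rewrite hinner_scal_l, proj_orth; auto. csolve.
Qed.

Lemma proj_sub p q : P (hsub p q) = hsub (P p) (P q).
Proof.
  replace (hsub p q) with (hadd p (hscal (Copp C1) q)) by vsolve.
  rewrite proj_add, proj_scal. vsolve.
Qed.

Lemma proj_compl_sub p q : hsub (hsub p (P p)) (hsub q (P q)) = hsub (hsub p q) (P (hsub p q)).
Proof. rewrite proj_sub. vsolve. Qed.

Lemma proj_compl_0 c : C c -> hsub c (P c) = hzero.
Proof. intro. rewrite proj_id; auto. vsolve. Qed.

Lemma re_inner_proj_l p : re_inner (P p) p = re_inner (P p) (P p).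
Proof.
  assert (O : re_inner (hsub p (P p)) (P p) = 0).
  { unfold re_inner. rewrite proj_orth by apply proj_in. reflexivity. }
  rewrite re_inner_sub_l in O. rewrite re_inner_sym. lra.
Qed.

Lemma proj_pythagoras p :
  re_inner p p = re_inner (P p) (P p) + re_inner (hsub p (P p)) (hsub p (P p)).
Proof.
  pose proof (re_inner_proj_l p).
  rewrite !re_inner_sub_l, !re_inner_sub_r, (re_inner_sym _ p (P p)). lra.
Qed.

Lemma proj_norm_le p : hnorm (P p) <= hnorm p.
Proof.
  apply hnorm_le_of_sqr. rewrite (proj_pythagoras p).
  pose proof (re_inner_self_nonneg _ (hsub p (P p))). lra.
Qed.

Lemma proj_compl_norm_le p : hnorm (hsub p (P p)) <= hnorm p.
Proof.
  apply hnorm_le_of_sqr. rewrite (proj_pythagoras p).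
  pose proof (re_inner_self_nonneg _ (P p)). lra.
Qed.

End OrthProj.

Definition compact_op (Y : Hilbert) (K : Y -> Y) : Prop :=
  forall (u : nat -> Y) (M : R), (forall n, hnorm (u n) <= M) ->
    exists (phi : nat -> nat) (l : Y), strictly_increasing phi /\ conv Y (fun n => K (u (phi n))) l.

Lemma compact_op_ext (Y : Hilbert) (K1 K2 : Y -> Y) :
  (forall p, K1 p = K2 p) -> compact_op Y K1 -> compact_op Y K2.
Proof.
  intros E H u M Hu. destruct (H u M Hu) as [phi [l [Hp Hc]]].
  exists phi, l. split; [exact Hp | apply (conv_ext _ _ _ _ (fun n => E _) Hc)].
Qed.

Lemma compact_op_sub (Y : Hilbert) (K1 K2 : Y -> Y) : compact_op Y K1 -> compact_op Y K2 ->
  compact_op Y (fun p => hsub (K1 p) (K2 p)).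
Proof.
  intros H1 H2 u M Hu. destruct (H1 u M Hu) as [phi [l [Hp Hc]]].
  destruct (H2 (fun n => u (phi n)) M (fun n => Hu (phi n))) as [psi [m [Hq Hd]]].
  exists (fun n => phi (psi n)), (hsub l m).
  split; [apply strictly_increasing_comp; auto |].
  apply conv_sub; auto. apply (conv_subseq _ (fun n => K1 (u (phi n)))); auto.
Qed.

Section CompactProjections.
Variable Y : Hilbert.
Variables (C1 C2 : Y -> Prop) (P Q : Y -> Y).
Hypotheses (HC1 : vsubspace Y C1) (HP : is_orth_proj Y C1 P).
Hypotheses (HC2 : vsubspace Y C2) (HQ : is_orth_proj Y C2 Q).

Let K (p : Y) : Y := hsub (Q p) (P (Q p)).

Lemma proj_compl_sqr_le p :
  re_inner (Q (hsub p (P p))) (Q (hsub p (P p))) <= hnorm (K (hsub p (P p))) * hnorm (hsub p (P p)).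
Proof.
  set (d := hsub p (P p)).
  assert (E : re_inner (Q d) (Q d) = re_inner (K d) d).
  { unfold K. rewrite re_inner_sub_l, <- (re_inner_proj_l _ C2 Q HQ d).
    enough (re_inner (P (Q d)) d = 0) by lra.
    unfold d. rewrite re_inner_sym. unfold re_inner.
    rewrite (proj_orth _ C1 P HP) by apply (proj_in _ C1 P HP). reflexivity. }
  rewrite E. apply cauchy_schwarz.
Qed.

(* [Q (I - P)] is the adjoint of [(I - P) Q]. *)
Lemma compact_proj_adjoint :
  compact_op Y K -> compact_op Y (fun p => Q (hsub p (P p))).
Proof.
  intros HK u B Hu.
  assert (B0 : 0 <= B) by (eapply Rle_trans; [apply hnorm_nonneg | apply (Hu 0%nat)]).
  set (v := fun n => hsub (u n) (P (u n))).
  assert (Hv : forall n, hnorm (v n) <= B).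
  { intro n. eapply Rle_trans; [apply (proj_compl_norm_le _ C1 P HP) | apply Hu]. }
  destruct (HK v B Hv) as [phi [l [Hp Hc]]].
  assert (Klin : forall a b, K (hsub a b) = hsub (K a) (K b)).
  { intros a b. unfold K. rewrite (proj_sub _ C2 Q HC2 HQ), (proj_sub _ C1 P HC1 HP). vsolve. }
  destruct (cauchy_conv Y (fun n => Q (v (phi n)))) as [l' Hl'].
  2: { exists phi, l'. split; assumption. }
  intros eps He.
  destruct (conv_cauchy _ _ _ Hc (eps * eps / (2 * B + 1))) as [N HN].
  { apply Rdiv_lt_0_compat; nra. }
  exists N. intros n m Hn Hm. specialize (HN n m Hn Hm). cbv beta in HN.
  set (w := hsub (u (phi n)) (u (phi m))).
  assert (Dv : hsub (v (phi n)) (v (phi m)) = hsub w (P w))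
    by (unfold v, w; apply (proj_compl_sub _ C1 P HC1 HP)).
  rewrite <- Klin, Dv in HN. rewrite <- (proj_sub _ C2 Q HC2 HQ), Dv.
  assert (Nd : hnorm (hsub w (P w)) <= 2 * B).
  { rewrite <- Dv. eapply Rle_trans; [apply hnorm_sub_triangle|].
    pose proof (Hv (phi n)). pose proof (Hv (phi m)). lra. }
  pose proof (proj_compl_sqr_le w) as L. rewrite <- hnorm_sqr in L.
  pose proof (hnorm_nonneg _ (Q (hsub w (P w)))).
  pose proof (hnorm_nonneg _ (K (hsub w (P w)))).
  assert (R1 : eps * eps / (2 * B + 1) * (2 * B) < eps * eps).
  { replace (eps * eps / (2 * B + 1) * (2 * B)) with (eps * eps - eps * eps / (2 * B + 1))
      by (field; lra).
    assert (0 < eps * eps / (2 * B + 1)) by (apply Rdiv_lt_0_compat; nra). lra. }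
  nra.
Qed.

End CompactProjections.

Section Square.
Variable X : Hilbert.

Lemma pnorm_fst_le (p : X2 X) : hnorm (fst p) <= pnorm X p.
Proof.
  apply sqrt_le_1_alt. pose proof (re_inner_self_nonneg _ (snd p)).
  unfold re_inner, pinner, Cplus, Cre in *. simpl. lra.
Qed.

Lemma pnorm_snd_le (p : X2 X) : hnorm (snd p) <= pnorm X p.
Proof.
  apply sqrt_le_1_alt. pose proof (re_inner_self_nonneg _ (fst p)).
  unfold re_inner, pinner, Cplus, Cre in *. simpl. lra.
Qed.

Lemma pnorm_le_sum (p : X2 X) : pnorm X p <= hnorm (fst p) + hnorm (snd p).
Proof.
  pose proof (hnorm_nonneg _ (fst p)). pose proof (hnorm_nonneg _ (snd p)).
  rewrite <- (sqrt_square (hnorm (fst p) + hnorm (snd p))) by lra.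
  apply sqrt_le_1_alt. change (Cre (pinner X p p))
    with (re_inner (fst p) (fst p) + re_inner (snd p) (snd p)).
  rewrite <- !hnorm_sqr. nra.
Qed.

Lemma pconv_pair (u1 u2 : nat -> X) l1 l2 : conv X u1 l1 -> conv X u2 l2 ->
  pconv X (fun n => (u1 n, u2 n)) (l1, l2).
Proof.
  intros H1 H2 eps He. destruct (H1 (eps/2)) as [N1 K1]; [lra|].
  destruct (H2 (eps/2)) as [N2 K2]; [lra|].
  exists (max N1 N2). intros n Hn. eapply Rle_lt_trans; [apply pnorm_le_sum|].
  simpl. specialize (K1 n ltac:(lia)). specialize (K2 n ltac:(lia)). lra.
Qed.

Lemma pnorm_cauchy_complete (u : nat -> X2 X) :
  (forall eps, eps > 0 -> exists N, forall n m, (n >= N)%nat -> (m >= N)%nat ->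
     pnorm X (psub X (u n) (u m)) < eps) ->
  exists l, pconv X u l.
Proof.
  intros Hu.
  destruct (cauchy_conv X (fun n => fst (u n))) as [l1 H1].
  { intros eps He. destruct (Hu eps He) as [N HN]. exists N. intros n m Hn Hm.
    eapply Rle_lt_trans; [apply (pnorm_fst_le (psub X (u n) (u m))) | apply HN; auto]. }
  destruct (cauchy_conv X (fun n => snd (u n))) as [l2 H2].
  { intros eps He. destruct (Hu eps He) as [N HN]. exists N. intros n m Hn Hm.
    eapply Rle_lt_trans; [apply (pnorm_snd_le (psub X (u n) (u m))) | apply HN; auto]. }
  exists (l1, l2). intros eps He. destruct (pconv_pair _ _ _ _ H1 H2 eps He) as [N HN].
  exists N. exact HN.
Qed.

(* [X2 X] with the inner product of the paper; its norm, convergence, orthogonal projections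
   and compact operators unfold to [pnorm], [pconv], [is_orth_proj2] and [compact2]. *)
Definition square_space : Hilbert.
Proof.
  refine {| H := X2 X; hadd := padd X; hzero := (hzero, hzero);
            hopp := fun p => (hopp (fst p), hopp (snd p));
            hscal := fun a p => (hscal a (fst p), hscal a (snd p));
            hinner := pinner X; hcomplete := pnorm_cauchy_complete |};
  unfold padd, pinner; intros; simpl.
  - rewrite !hadd_assoc. reflexivity.
  - rewrite (hadd_comm (fst x)), (hadd_comm (snd x)). reflexivity.
  - rewrite !hadd_0. destruct x; reflexivity.
  - rewrite !hadd_opp. reflexivity.
  - rewrite !hscal_assoc. reflexivity.
  - rewrite !hscal_1. destruct x; reflexivity.
  - rewrite !hscal_distr_v. reflexivity.
  - rewrite !hscal_distr_c. reflexivity.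
  - rewrite !hinner_add_l. destruct (hinner (fst x) (fst z)), (hinner (fst y) (fst z)),
      (hinner (snd x) (snd z)), (hinner (snd y) (snd z)). csolve.
  - rewrite !hinner_scal_l. destruct (hinner (fst x) (fst y)), (hinner (snd x) (snd y)), a.
    csolve.
  - rewrite (hinner_conj (fst x)), (hinner_conj (snd x)).
    destruct (hinner (fst x) (fst y)), (hinner (snd x) (snd y)). csolve.
  - pose proof (re_inner_self_nonneg _ (fst x)). pose proof (re_inner_self_nonneg _ (snd x)).
    unfold re_inner, Cre, Cplus in *. simpl. lra.
  - rename H into E.
    pose proof (re_inner_self_nonneg _ (fst x)). pose proof (re_inner_self_nonneg _ (snd x)).
    unfold Cplus, C0 in E. injection E; intros. unfold re_inner, Cre in *.
    destruct x as [x1 x2]. simpl in *.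
    rewrite (re_inner_self_eq0 _ x1), (re_inner_self_eq0 _ x2)
      by (unfold re_inner, Cre; lra).
    reflexivity.
Defined.

End Square.

Lemma compact_op_of_lipschitz_factor (X Y : Hilbert) (K : Y -> Y) (G : X -> Y) (L : R) :
  0 <= L -> (forall a b, hnorm (hsub (G a) (G b)) <= L * hnorm (hsub a b)) ->
  (forall (u : nat -> Y) M, (forall n, hnorm (u n) <= M) ->
     exists (a : nat -> X) (phi : nat -> nat) (l : X), (forall n, K (u n) = G (a n)) /\
       strictly_increasing phi /\ conv X (fun n => a (phi n)) l) ->
  compact_op Y K.
Proof.
  intros HL HG Hfac u M Hu. destruct (Hfac u M Hu) as [a [phi [l [E [Hp Hc]]]]].
  exists phi, (G l). split; [exact Hp |].
  apply (conv_ext _ (fun n => G (a (phi n)))); [intro n; symmetry; apply E |].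
  apply (conv_lipschitz X Y G L); auto.
Qed.

Section Relations.
Variable X : Hilbert.
Implicit Types R : rel X.

Definition graph R : square_space X -> Prop := fun p => R (fst p) (snd p).
Definition mulpart R : X -> Prop := fun g => R hzero g.

Lemma subspace_add R x f y g : is_subspace X R -> R x f -> R y g -> R (hadd x y) (hadd f g).
Proof. intros [_ [Ha _]]. auto. Qed.

Lemma subspace_scal R a x f : is_subspace X R -> R x f -> R (hscal a x) (hscal a f).
Proof. intros [_ [_ Hs]]. auto. Qed.

Lemma subspace_sub R x f y g : is_subspace X R -> R x f -> R y g -> R (hsub x y) (hsub f g).
Proof.
  intros HR H1 H2.
  replace (hsub x y) with (hadd x (hscal (Copp C1) y)) by vsolve.
  replace (hsub f g) with (hadd f (hscal (Copp C1) g)) by vsolve.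
  apply subspace_add, subspace_scal; auto.
Qed.

Lemma subspace_diff_mulpart R x f g : is_subspace X R -> R x f -> R x g -> mulpart R (hsub f g).
Proof.
  intros HR Hf Hg. unfold mulpart.
  replace hzero with (hsub x x) by vsolve. apply subspace_sub; auto.
Qed.

Lemma mulpart_vsubspace R : is_subspace X R -> vsubspace X (mulpart R).
Proof.
  intros HR. unfold mulpart. split; [apply HR | split].
  - intros x y Hx Hy. rewrite <- (hadd_0 hzero). apply subspace_add; auto.
  - intros a x Hx. replace (@hzero X) with (hscal a (@hzero X)) at 1 by vsolve.
    apply subspace_scal; auto.
Qed.

Lemma mulpart_vclosed R : is_closed X R -> vclosed X (mulpart R).
Proof.
  intros Hc u l Hu Hl. apply (Hc (fun n => (hzero, u n)) (hzero, l)); [exact Hu |].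
  intros eps He. destruct (Hl eps He) as [N HN]. exists N. intros n Hn.
  eapply Rle_lt_trans; [apply pnorm_le_sum |]. simpl.
  replace (hsub hzero hzero) with (@hzero X) by vsolve. rewrite hnorm_0.
  specialize (HN n Hn). lra.
Qed.

Lemma graph_vsubspace R : is_subspace X R -> vsubspace (square_space X) (graph R).
Proof.
  intros [H0 [Ha Hs]]. split; [exact H0 | split]; intros; unfold graph in *; simpl; auto.
Qed.

Lemma graph_vclosed R : is_closed X R -> vclosed (square_space X) (graph R).
Proof. intros Hc u l. exact (Hc u l). Qed.

Lemma Tpart_orth R x f m : Tpart X R x f -> mulpart R m -> hinner f m = C0.
Proof.
  intros [_ Ho] Hm. specialize (Ho hzero m (conj eq_refl Hm)). unfold pinner in Ho.
  simpl in Ho. rewrite hinner_0_r in Ho. destruct (hinner f m).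
  unfold Cplus, C0 in *. injection Ho; intros. apply Cplx_eq; simpl; lra.
Qed.

Lemma Tpart_intro R x f : R x f -> (forall m, mulpart R m -> hinner f m = C0) -> Tpart X R x f.
Proof.
  intros Hf Ho. split; [exact Hf |]. intros y g [-> Hg].
  unfold pinner; simpl. rewrite hinner_0_r, Ho by exact Hg. csolve.
Qed.

Lemma Tpart_scal R a x f : is_subspace X R -> Tpart X R x f -> Tpart X R (hscal a x) (hscal a f).
Proof.
  intros HR Hf. apply Tpart_intro; [apply subspace_scal; auto; apply Hf |].
  intros m Hm. rewrite hinner_scal_l, (Tpart_orth R x f m Hf Hm). csolve.
Qed.

(* The operator part at [x] is [f] minus its projection onto [R(0)]. *)
Lemma Tpart_exists R x f : closed_subspace X R -> R x f ->
  exists f', Tpart X R x f' /\ mulpart R (hsub f f') /\ hnorm f' <= hnorm f.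
Proof.
  intros [HR Hcl] Hf. pose proof (mulpart_vsubspace R HR) as M.
  destruct (orth_proj_exists X _ M (mulpart_vclosed R Hcl)) as [Q HQ].
  exists (hsub f (Q f)). split; [|split].
  - apply Tpart_intro; [| intros m Hm; apply (proj_orth _ _ Q HQ), Hm].
    replace x with (hsub x hzero) by vsolve. apply subspace_sub; auto.
    apply (proj_in _ _ Q HQ).
  - replace (hsub f (hsub f (Q f))) with (Q f) by vsolve. apply (proj_in _ _ Q HQ).
  - apply (proj_compl_norm_le _ _ Q HQ).
Qed.

Lemma Tpart_dom R x : closed_subspace X R -> dom X R x -> exists f, Tpart X R x f.
Proof. intros HR [f Hf]. destruct (Tpart_exists R x f HR Hf) as [f' [Hf' _]]. eauto. Qed.

Lemma hermitian_mulpart_orth R g x : hermitian X R -> mulpart R g -> dom X R x -> hinner g x = C0.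
Proof. intros Hh Hg [f Hf]. rewrite (Hh _ _ Hg x f Hf). apply hinner_0_l. Qed.

(* Since [(lam I - R)^-1] is everywhere defined, [y = lam z - f] with [(z, f) in R]. Then
   [y] orthogonal to [D(R)] forces [z = 0] (for real [lam] via a preimage of [z], for
   non-real [lam] via [Im <f, z> = 0]), so [(0, y) = -(0, f)] lies in [R]. *)
Lemma resolvent_mulpart R lam y : is_subspace X R -> hermitian X R -> in_resolvent X lam R ->
  (forall x, dom X R x -> hinner y x = C0) -> mulpart R y.
Proof.
  intros HR Hh [_ [Hsurj _]] Hy.
  destruct (Hsurj y) as [z [f [Hzf Ey]]].
  assert (Ef : f = hsub (hscal lam z) y) by (rewrite Ey; vsolve).
  assert (Hz : z = hzero).
  { apply hinner_def.
    assert (Hyz : hinner y z = C0) by (apply Hy; exists f; auto).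
    destruct (Req_dec (snd lam) 0) as [Hl|Hl].
    - destruct (Hsurj z) as [x [h [Hxh Ez]]].
      pose proof (Hh z f Hzf x h Hxh) as E1.
      assert (Hyx : hinner y x = C0) by (apply Hy; exists h; auto).
      assert (E2 : hinner f x = Cmult lam (hinner z x)).
      { rewrite Ef, hinner_sub_l, hinner_scal_l, Hyx. destruct (Cmult lam (hinner z x)). csolve. }
      rewrite Ez at 2. rewrite hinner_sub_r, hinner_scal_r, <- E1, E2.
      destruct lam as [l1 l2]. simpl in Hl. subst l2. destruct (hinner z x). csolve.
    - pose proof (Hh z f Hzf z f Hzf) as E1.
      rewrite Ef in E1 at 1. rewrite hinner_sub_l, hinner_scal_l, Hyz in E1.
      rewrite (hinner_conj f z), Ef, hinner_sub_l, hinner_scal_l, Hyz in E1.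
      pose proof (hinner_self_im _ z) as Im. destruct (hinner z z) as [r i]. simpl in Im. subst i.
      destruct lam as [l1 l2]. unfold Cmult, Cplus, Copp, C0, Cconj in E1. simpl in *.
      injection E1; intros. assert (Hm : l2 * r = 0) by lra.
      apply Rmult_integral in Hm. destruct Hm; [contradiction | subst; reflexivity]. }
  subst z. unfold mulpart. replace y with (hscal (Copp C1) f) by (rewrite Ey; vsolve).
  replace hzero with (hscal (Copp C1) (@hzero X)) by vsolve. apply subspace_scal; auto.
Qed.

Lemma mulpart_eq_of_dom_eq T S lam :
  is_subspace X T -> is_subspace X S -> hermitian X T -> hermitian X S ->
  in_resolvent X lam T -> in_resolvent X lam S ->
  (forall x, dom X T x <-> dom X S x) -> forall g, mulpart T g <-> mulpart S g.
Proof.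
  intros HT HS hT hS RT RS Hdom g. split; intro Hg.
  - apply (resolvent_mulpart S lam g HS hS RS). intros x Hx.
    apply (hermitian_mulpart_orth T g x hT Hg), Hdom, Hx.
  - apply (resolvent_mulpart T lam g HT hT RT). intros x Hx.
    apply (hermitian_mulpart_orth S g x hS Hg), Hdom, Hx.
Qed.

Lemma orth_of_T0_vsubspace R : vsubspace X (orth_of_T0 X R).
Proof.
  split; [| split].
  - intros g _. apply hinner_0_l.
  - intros x y Hx Hy g Hg. rewrite hinner_add_l, Hx, Hy by exact Hg. csolve.
  - intros a x Hx g Hg. rewrite hinner_scal_l, Hx by exact Hg. csolve.
Qed.

Lemma dom_orth_of_T0 R x : hermitian X R -> dom X R x -> orth_of_T0 X R x.
Proof.
  intros Hh Hd g Hg. rewrite (hinner_conj g x), (hermitian_mulpart_orth R g x Hh Hg Hd). csolve.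
Qed.

Definition vdefect (P : square_space X -> square_space X) (z : X) : square_space X :=
  hsub ((hzero, z) : square_space X) (P (hzero, z)).

Section GraphProjection.
Variable R : rel X.
Variable P : square_space X -> square_space X.
Hypothesis HR : is_subspace X R.
Hypothesis HP : is_orth_proj (square_space X) (graph R) P.

Lemma vdefect_sub a b : hsub (vdefect P a) (vdefect P b) = vdefect P (hsub a b).
Proof.
  unfold vdefect. rewrite (proj_compl_sub _ _ P (graph_vsubspace R HR) HP).
  f_equal; f_equal; apply injective_projections; simpl; vsolve.
Qed.

Lemma vdefect_lipschitz a b : hnorm (hsub (vdefect P a) (vdefect P b)) <= 1 * hnorm (hsub a b).
Proof.
  rewrite vdefect_sub, Rmult_1_l. eapply Rle_trans; [apply (proj_compl_norm_le _ _ P HP) |].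
  eapply Rle_trans; [apply pnorm_le_sum |]. simpl. rewrite hnorm_0. lra.
Qed.

Lemma proj_compl_add_vertical t z : graph R t ->
  hsub (hadd t (hzero, z)) (P (hadd t (hzero, z))) = vdefect P z.
Proof.
  intro Ht. pose proof (graph_vsubspace R HR) as G.
  rewrite (proj_add _ _ P G HP), (proj_id _ _ P G HP t Ht).
  unfold vdefect. apply injective_projections; simpl; vsolve.
Qed.

End GraphProjection.
End Relations.

Section Perturbation.
Variable X : Hilbert.
Variables T S A : rel X.
Hypotheses (HT : closed_subspace X T) (HS : closed_subspace X S) (HA : closed_subspace X A).
Hypothesis Hdom : forall x, dom X T x <-> dom X S x.
Hypothesis HdA : forall x, dom X T x -> dom X A x.
Hypothesis Heq : rel_eq X T (rel_sum X S A).
Hypothesis HM : forall g, mulpart X T g <-> mulpart X S g.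
Hypothesis hT : hermitian X T.

Let Y := square_space X.
Variables PT PS : Y -> Y.
Hypotheses (HPT : is_orth_proj Y (graph X T) PT) (HPS : is_orth_proj Y (graph X S) PS).

Lemma sum_in_T x g a : S x g -> A x a -> T x (hadd g a).
Proof. intros. apply Heq. exists g, a. auto. Qed.

Lemma mulpart_A_T m : mulpart X A m -> mulpart X T m.
Proof. intro. unfold mulpart. rewrite <- (hadd_0_l _ m). apply sum_in_T; auto. apply HS. Qed.

Lemma Apart_of_dom_S x : dom X S x -> exists a, Tpart X A x a.
Proof. intro. apply Tpart_dom; [exact HA | apply HdA, Hdom; assumption]. Qed.

Lemma Spart_decomp Q x s t a : is_orth_proj X (mulpart X T) Q ->
  Tpart X S x s -> Tpart X T x t -> A x a -> s = hsub t (hsub a (Q a)).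
Proof.
  intros HQ Hs Ht Ha. pose proof (mulpart_vsubspace X T (proj1 HT)) as M.
  apply hsub_eq0, hinner_def.
  set (z := hsub s (hsub t (hsub a (Q a)))).
  assert (Zm : mulpart X T z).
  { replace z with (hsub (hsub (hadd s a) t) (Q a)) by (unfold z; vsolve).
    apply (vsubspace_sub X _ _ _ M); [| apply (proj_in _ _ Q HQ)].
    apply (subspace_diff_mulpart X T x); [apply HT | apply sum_in_T; auto; apply Hs | apply Ht]. }
  unfold z at 1. rewrite 2!hinner_sub_l.
  rewrite (Tpart_orth X S x s z Hs) by (apply HM, Zm).
  rewrite (Tpart_orth X T x t z Ht Zm), (proj_orth _ _ Q HQ a z Zm). csolve.
Qed.

Lemma S_of_T_sub_Apart x f a : T x f -> Tpart X A x a -> S x (hsub f a).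
Proof.
  intros Hf Ha. destruct (proj1 (Heq x f) Hf) as [g [b [Hg [Hb ->]]]].
  assert (Mba : mulpart X S (hsub b a)).
  { apply HM, mulpart_A_T, (subspace_diff_mulpart X A x); [apply HA | exact Hb | apply Ha]. }
  replace x with (hadd x hzero) by vsolve.
  replace (hsub (hadd g b) a) with (hadd g (hsub b a)) by vsolve.
  apply subspace_add; [apply HS | exact Hg | exact Mba].
Qed.

Section RelCompact.
Hypothesis Hrc : rel_compact X (Tpart X A) (Tpart X S).

(* Along such a sequence, [S_s x_n = T_s x_n - (I - Q) A_s x_n] with [Q] the projection onto
   [T(0)]: a subsequence converges to a vector of [S(0) = T(0)] orthogonal to [T(0)]. *)
Lemma no_unit_Spart_vanishing_Tpart (x s t : nat -> X) :
  (forall n, Tpart X S (x n) (s n)) -> (forall n, Tpart X T (x n) (t n)) ->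
  (forall n, hnorm (s n) = 1) -> (forall n, hnorm (x n) + hnorm (t n) <= / (INR n + 1)) -> False.
Proof.
  intros Hs Ht Ns Nxt. destruct Hrc as [_ Hseq].
  destruct (choice (fun n a => Tpart X A (x n) a)) as [a Ha].
  { intro n. apply Apart_of_dom_S. exists (s n). apply Hs. }
  destruct (Hseq x s a 2 Hs Ha) as [phi [l [Hphi Hl]]].
  { intro n. rewrite Ns. pose proof (Nxt n). pose proof (inv_succ_le_1 n).
    pose proof (hnorm_nonneg _ (t n)). lra. }
  pose proof (mulpart_vsubspace X T (proj1 HT)) as M.
  destruct (orth_proj_exists X _ M (mulpart_vclosed X T (proj2 HT))) as [Q HQ].
  assert (Cx : conv X (fun n => x (phi n)) hzero).
  { apply (conv_subseq _ x); auto. apply conv_0_of_le_inv. intro n.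
    pose proof (Nxt n). pose proof (hnorm_nonneg _ (t n)). lra. }
  assert (Ct : conv X (fun n => t (phi n)) hzero).
  { apply (conv_subseq _ t); auto. apply conv_0_of_le_inv. intro n.
    pose proof (Nxt n). pose proof (hnorm_nonneg _ (x n)). lra. }
  assert (Ca : conv X (fun n => hsub (a (phi n)) (Q (a (phi n)))) (hsub l (Q l))).
  { apply (conv_lipschitz X X (fun b => hsub b (Q b)) 1); [lra | | exact Hl].
    intros b c. rewrite (proj_compl_sub _ _ Q M HQ), Rmult_1_l.
    apply (proj_compl_norm_le _ _ Q HQ). }
  set (sg := hsub hzero (hsub l (Q l))).
  assert (Cs : conv X (fun n => s (phi n)) sg).
  { apply (conv_ext _ (fun n => hsub (t (phi n)) (hsub (a (phi n)) (Q (a (phi n)))))).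
    - intro n. symmetry. apply (Spart_decomp Q (x (phi n))); auto; apply Ha.
    - apply conv_sub; auto. }
  assert (Ssg : mulpart X S sg).
  { apply (proj2 HS (fun n => (x (phi n), s (phi n))) (hzero, sg)).
    - intro n. apply Hs.
    - apply pconv_pair; auto. }
  assert (Z : sg = hzero).
  { apply hinner_def. unfold sg at 1.
    rewrite hinner_sub_l, hinner_0_l, (proj_orth _ _ Q HQ) by apply HM, Ssg. csolve. }
  rewrite Z in Cs. destruct (Cs (1/2)) as [N HN]; [lra |].
  specialize (HN N (le_n N)).
  replace (hsub (s (phi N)) hzero) with (s (phi N)) in HN by vsolve. rewrite Ns in HN. lra.
Qed.

Lemma Spart_bound : exists C, 0 <= C /\ forall x s t, Tpart X S x s -> Tpart X T x t ->
  hnorm s <= C * (hnorm x + hnorm t).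
Proof.
  apply NNPP; intro Hn.
  assert (Hseq : forall n : nat, exists p : X * X * X,
     Tpart X S (fst (fst p)) (snd (fst p)) /\ Tpart X T (fst (fst p)) (snd p) /\
     hnorm (snd (fst p)) > (INR n + 1) * (hnorm (fst (fst p)) + hnorm (snd p))).
  { intro n. apply NNPP; intro Hno. apply Hn. exists (INR n + 1).
    split; [pose proof (pos_INR n); lra |].
    intros x s t Hs Ht. apply Rnot_lt_le. intro Hlt. apply Hno. exists (x, s, t). simpl. auto. }
  destruct (choice _ Hseq) as [p Hp].
  set (r := fun n => / hnorm (snd (fst (p n)))).
  assert (Sp : forall n, 0 < hnorm (snd (fst (p n)))).
  { intro n. destruct (Hp n) as [_ [_ L]]. pose proof (pos_INR n).
    pose proof (hnorm_nonneg _ (fst (fst (p n)))). pose proof (hnorm_nonneg _ (snd (p n))). nra. }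
  assert (Hr : forall n, 0 < r n) by (intro; apply Rinv_0_lt_compat; auto).
  set (sc := fun n (v : X) => hscal (RtoC (r n)) v).
  assert (Nsc : forall n v, hnorm (sc n v) = r n * hnorm v).
  { intros n v. unfold sc. rewrite hnorm_scal_real, Rabs_right by (left; apply Hr). reflexivity. }
  apply (no_unit_Spart_vanishing_Tpart (fun n => sc n (fst (fst (p n))))
           (fun n => sc n (snd (fst (p n)))) (fun n => sc n (snd (p n)))).
  - intro n. apply Tpart_scal; [apply HS | apply Hp].
  - intro n. apply Tpart_scal; [apply HT | apply Hp].
  - intro n. rewrite Nsc. unfold r. field. specialize (Sp n). lra.
  - intro n. rewrite !Nsc. destruct (Hp n) as [_ [_ L]]. specialize (Sp n). pose proof (pos_INR n).
    unfold r. apply (Rmult_le_reg_l (hnorm (snd (fst (p n))) * (INR n + 1))); [nra |].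
    field_simplify; lra.
Qed.


(* A point [(x, f)] of [S] is [(x, f + A_s x) - (0, A_s x)] with the first term in [T]. *)
Lemma compl_T_proj_S_compact : compact_op Y (fun p => hsub (PS p) (PT (PS p))).
Proof.
  destruct Hrc as [_ Hseq].
  apply (compact_op_of_lipschitz_factor X Y _ (fun z => vdefect X PT (hopp z)) 1); [lra | |].
  { intros a b. eapply Rle_trans; [apply (vdefect_lipschitz X T PT (proj1 HT) HPT) |].
    rewrite (Rmult_1_l (hnorm _)). apply hopp_lipschitz. }
  intros u B Hu. set (w := fun n => PS (u n)).
  assert (Nw : forall n, hnorm (w n) <= B)
    by (intro n; eapply Rle_trans; [apply (proj_norm_le _ _ PS HPS) | apply Hu]).
  destruct (choice (fun n s => Tpart X S (fst (w n)) s /\ hnorm s <= hnorm (snd (w n)))) as [s Hs].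
  { intro n. destruct (Tpart_exists X S _ _ HS (proj_in _ _ PS HPS (u n))) as [f' [Hf' [_ Nf']]].
    eauto. }
  destruct (choice (fun n a => Tpart X A (fst (w n)) a)) as [a Ha].
  { intro n. apply Apart_of_dom_S. exists (snd (w n)). apply (proj_in _ _ PS HPS). }
  destruct (Hseq (fun n => fst (w n)) s a (2 * B)) as [phi [l [Hphi Hl]]];
    [intro n; apply Hs | intro n; apply Ha | |].
  { intro n. destruct (Hs n) as [_ Hsn]. pose proof (pnorm_fst_le X (w n)).
    pose proof (pnorm_snd_le X (w n)). specialize (Nw n). change (pnorm X (w n) <= B) in Nw.
    lra. }
  exists a, phi, l. split; [| split; assumption].
  intro n. set (t := ((fst (w n), hadd (snd (w n)) (a n)) : Y)).
  assert (Tt : graph X T t).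
  { apply sum_in_T; [apply (proj_in _ _ PS HPS) | apply Ha]. }
  change (hsub (w n) (PT (w n)) = vdefect X PT (hopp (a n))).
  replace (w n) with (hadd t (hzero, hopp (a n)))
    by (apply injective_projections; simpl; vsolve).
  apply (proj_compl_add_vertical X T PT (proj1 HT) HPT), Tt.
Qed.

(* A point [(x, f)] of [T] is [(x, f - A_s x) + (0, A_s x)] with the first term in [S]. *)
Lemma compl_S_proj_T_compact : compact_op Y (fun p => hsub (PT p) (PS (PT p))).
Proof.
  destruct Spart_bound as [Cb [Cb0 HCb]]. destruct Hrc as [_ Hseq].
  apply (compact_op_of_lipschitz_factor X Y _ (vdefect X PS) 1);
    [lra | apply (vdefect_lipschitz X S PS (proj1 HS) HPS) |].
  intros u B Hu. set (w := fun n => PT (u n)).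
  assert (Tw : forall n, T (fst (w n)) (snd (w n))) by (intro n; apply (proj_in _ _ PT HPT)).
  assert (Nw : forall n, pnorm X (w n) <= B)
    by (intro n; eapply Rle_trans; [apply (proj_norm_le _ _ PT HPT) | apply Hu]).
  assert (DS : forall n, dom X S (fst (w n)))
    by (intro n; apply Hdom; exists (snd (w n)); apply Tw).
  destruct (choice (fun n a => Tpart X A (fst (w n)) a)) as [a Ha].
  { intro n. apply Apart_of_dom_S, DS. }
  destruct (choice (fun n t => Tpart X T (fst (w n)) t /\ hnorm t <= hnorm (snd (w n)))) as [t Ht].
  { intro n. destruct (Tpart_exists X T _ _ HT (Tw n)) as [f' [Hf' [_ Nf']]]. eauto. }
  destruct (choice (fun n s => Tpart X S (fst (w n)) s)) as [s Hs].
  { intro n. apply Tpart_dom; [exact HS | apply DS]. }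
  destruct (Hseq (fun n => fst (w n)) s a ((1 + Cb) * (2 * B))) as [phi [l [Hphi Hl]]];
    [exact Hs | exact Ha | |].
  { intro n. pose proof (HCb _ _ _ (Hs n) (proj1 (Ht n))). destruct (Ht n) as [_ Htn].
    pose proof (pnorm_fst_le X (w n)). pose proof (pnorm_snd_le X (w n)). pose proof (Nw n).
    pose proof (hnorm_nonneg _ (fst (w n))). pose proof (hnorm_nonneg _ (t n)).
    assert (Cb * (hnorm (fst (w n)) + hnorm (t n)) <= Cb * (2 * B))
      by (apply Rmult_le_compat_l; lra).
    nra. }
  exists a, phi, l. split; [| split; assumption].
  intro n. set (t0 := ((fst (w n), hsub (snd (w n)) (a n)) : Y)).
  assert (St0 : graph X S t0) by (apply S_of_T_sub_Apart; [apply Tw | apply Ha]).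
  change (hsub (w n) (PS (w n)) = vdefect X PS (a n)).
  replace (w n) with (hadd t0 (hzero, a n)) by (apply injective_projections; simpl; vsolve).
  apply (proj_compl_add_vertical X S PS (proj1 HS) HPS), St0.
Qed.

Lemma proj_diff_compact : compact_op Y (fun p => hsub (PT p) (PS p)).
Proof.
  apply (compact_op_ext Y (fun p => hsub (hsub (PT p) (PS (PT p))) (PS (hsub p (PT p))))).
  { intro p. rewrite (proj_sub _ _ PS (graph_vsubspace X S (proj1 HS)) HPS). vsolve. }
  apply compact_op_sub; [exact compl_S_proj_T_compact |].
  apply (compact_proj_adjoint Y _ _ PT PS (graph_vsubspace X T (proj1 HT)) HPT
           (graph_vsubspace X S (proj1 HS)) HPS).
  exact compl_T_proj_S_compact.
Qed.

End RelCompact.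

Lemma Apart_orth_of_T0 P0 x g : is_orth_proj X (orth_of_T0 X T) P0 ->
  (forall x f, A x f -> A (P0 x) (P0 f)) -> Tpart X A x g -> dom X T x -> orth_of_T0 X T g.
Proof.
  intros HP0 Hred Hg Hx.
  assert (Px : P0 x = x)
    by (apply (proj_id _ _ P0 (orth_of_T0_vsubspace X T) HP0), dom_orth_of_T0; auto).
  assert (Ad : mulpart X A (hsub g (P0 g))).
  { apply (subspace_diff_mulpart X A x); [apply HA | apply Hg |].
    rewrite <- Px at 1. apply Hred, Hg. }
  replace g with (P0 g); [apply (proj_in _ _ P0 HP0) |].
  symmetry. apply hsub_eq0, hinner_def. set (d := hsub g (P0 g)).
  unfold d at 1. rewrite hinner_sub_l, (Tpart_orth X A x g d Hg Ad), (hinner_conj d (P0 g)).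
  unfold d. rewrite (proj_orth _ _ P0 HP0) by apply (proj_in _ _ P0 HP0). csolve.
Qed.

Lemma proj_diff_graph_point x y g : S x y -> A x g ->
  hsub (PT (x, y)) (PS (x, y)) = vdefect X PT g.
Proof.
  intros Hy Hg. set (u := ((x, y) : Y)).
  rewrite (proj_id _ _ PS (graph_vsubspace X S (proj1 HS)) HPS u Hy).
  set (v := ((x, hadd y g) : Y)).
  assert (Tv : graph X T v) by (apply sum_in_T; assumption).
  assert (E : hsub u (PT u) = hsub hzero (vdefect X PT g)).
  { replace u with (hsub v (hzero, g)) by (apply injective_projections; simpl; vsolve).
    rewrite <- (proj_compl_sub _ _ PT (graph_vsubspace X T (proj1 HT)) HPT),
      (proj_compl_0 _ _ PT (graph_vsubspace X T (proj1 HT)) HPT v Tv).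
    reflexivity. }
  replace (hsub (PT u) u) with (hsub hzero (hsub u (PT u))) by vsolve.
  rewrite E. vsolve.
Qed.

(* With [(x, f) = P_T (0, z)], both [x] and [z - f] are components of [(0, z) - P_T (0, z)],
   and for [z] in [T(0)^perp] the vector [z - T_s x] is the part of [z - f] orthogonal to [T(0)]. *)
Lemma vdefect_bounded_below Cb : (forall x f, Tpart X T x f -> hnorm f <= Cb * hnorm x) ->
  forall z, orth_of_T0 X T z -> hnorm z <= (1 + Rabs Cb) * hnorm (vdefect X PT z).
Proof.
  intros HCb z Hz. set (q := PT (hzero, z)).
  destruct (Tpart_exists X T _ _ HT (proj_in _ _ PT HPT (hzero, z))) as [tz [Htz [Hm _]]].
  fold q in Htz, Hm.
  assert (N1 : hnorm (fst q) <= hnorm (vdefect X PT z)).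
  { eapply Rle_trans; [| apply (pnorm_fst_le X (vdefect X PT z))].
    change (hnorm (fst q) <= hnorm (hsub hzero (fst q))).
    replace (hsub hzero (fst q)) with (hopp (fst q)) by vsolve. rewrite hnorm_opp. lra. }
  assert (N2 : hnorm (hsub z tz) <= hnorm (vdefect X PT z)).
  { eapply Rle_trans; [| apply (pnorm_snd_le X (vdefect X PT z))].
    change (hnorm (hsub z tz) <= hnorm (hsub z (snd q))).
    apply hnorm_le_of_sqr. set (m := hsub (snd q) tz) in *.
    replace (hsub z (snd q)) with (hsub (hsub z tz) m) by (unfold m; vsolve).
    assert (O : re_inner (hsub z tz) m = 0).
    { unfold re_inner. rewrite hinner_sub_l, (Hz m Hm), (Tpart_orth X T _ _ _ Htz Hm).
      unfold Cre, Cplus, Copp, C0; simpl; ring. }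
    remember (hsub z tz) as r.
    rewrite !re_inner_sub_l, !re_inner_sub_r, (re_inner_sym _ m r), O.
    pose proof (re_inner_self_nonneg _ m). lra. }
  replace z with (hadd (hsub z tz) tz) at 1 by vsolve.
  eapply Rle_trans; [apply hnorm_triangle |].
  assert (hnorm tz <= Rabs Cb * hnorm (vdefect X PT z)).
  { eapply Rle_trans; [apply (HCb _ _ Htz) |].
    apply Rle_trans with (Rabs Cb * hnorm (fst q)).
    - apply Rmult_le_compat_r; [apply hnorm_nonneg | apply Rle_abs].
    - apply Rmult_le_compat_l; [apply Rabs_pos | exact N1]. }
  lra.
Qed.

Lemma rel_compact_of_proj_diff_compact :
  compact_op Y (fun p => hsub (PT p) (PS p)) -> reduces X (orth_of_T0 X T) A ->
  bounded_on_dom X (Tpart X T) -> rel_compact X (Tpart X A) (Tpart X S).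
Proof.
  intros Hc [P0 [HP0 Hred]] [Cb HCb]. split.
  { intros x [f Hf]. apply Apart_of_dom_S. exists f. apply Hf. }
  intros x y g M Hy Hg HM0.
  assert (Og : forall n, orth_of_T0 X T (g n)).
  { intro n. apply (Apart_orth_of_T0 P0 (x n)); auto. apply Hdom. exists (y n). apply Hy. }
  destruct (Hc (fun n => (x n, y n)) M) as [phi [L [Hphi HL]]].
  { intro n. eapply Rle_trans; [apply pnorm_le_sum | apply HM0]. }
  destruct (cauchy_conv X (fun n => g (phi n))) as [l Hl].
  2: { exists phi, l. split; assumption. }
  intros eps He. set (K := 1 + Rabs Cb).
  assert (K0 : 0 < K) by (unfold K; pose proof (Rabs_pos Cb); lra).
  destruct (conv_cauchy _ _ _ HL (eps / K)) as [N HN]; [apply Rdiv_lt_0_compat; lra |].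
  exists N. intros n m Hn Hm. specialize (HN n m Hn Hm). cbv beta in HN.
  rewrite !(proj_diff_graph_point (x _) (y _) (g _)) in HN by (apply Hy || apply Hg).
  rewrite (vdefect_sub X T PT (proj1 HT) HPT) in HN.
  eapply Rle_lt_trans.
  { apply (vdefect_bounded_below Cb HCb).
    apply (vsubspace_sub X _ _ _ (orth_of_T0_vsubspace X T)); apply Og. }
  apply (Rmult_lt_compat_l K) in HN; [| exact K0].
  replace (K * (eps / K)) with eps in HN by (field; lra). exact HN.
Qed.

End Perturbation.

Theorem theorem3p4 (X : Hilbert) (T S A : rel X) :
  closed_subspace X T -> closed_subspace X S -> closed_subspace X A ->
  hermitian X T -> hermitian X S -> hermitian X A ->
  (forall x, dom X T x <-> dom X S x) ->
  (forall x, dom X T x -> dom X A x) ->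
  rel_eq X T (rel_sum X S A) ->
  (exists lam : Cplx, in_resolvent X lam T /\ in_resolvent X lam S) ->
  (rel_compact X (Tpart X A) (Tpart X S) -> compact_perturbation X T S) /\
  (compact_perturbation X T S ->
   reduces X (orth_of_T0 X T) S -> reduces X (orth_of_T0 X T) A ->
   bounded_on_dom X (Tpart X T) ->
   rel_compact X (Tpart X A) (Tpart X S)).
Proof.
  intros HT HS HA hT hS _ Hdom HdA Heq [lam [RT RS]].
  pose proof (mulpart_eq_of_dom_eq X T S lam (proj1 HT) (proj1 HS) hT hS RT RS Hdom) as HM.
  split.
  - intro Hrc.
    destruct (orth_proj_exists _ _ (graph_vsubspace X T (proj1 HT))
                (graph_vclosed X T (proj2 HT))) as [PT HPT].
    destruct (orth_proj_exists _ _ (graph_vsubspace X S (proj1 HS))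
                (graph_vclosed X S (proj2 HS))) as [PS HPS].
    exists PT, PS. split; [exact HPT | split; [exact HPS |]].
    exact (proj_diff_compact X T S A HT HS HA Hdom HdA Heq HM PT PS HPT HPS Hrc).
  - intros [PT [PS [HPT [HPS Hc]]]] _ HredA Hb.
    exact (rel_compact_of_proj_diff_compact X T S A HT HS HA Hdom HdA Heq hT PT PS HPT HPS
             Hc HredA Hb).
Qed.
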